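(* Let $\mathsf{v}_1,\mathsf{v}_2\in V$ be consistently oriented, ultraparallel spacelike vectors. Suppose $p_i=a_i\mathsf{v}_i^- - b_i\mathsf{v}_i^+$ with $a_i,b_i>0$ for $i=1,2$ (regarded as points of $E$ via a chosen origin). Then the crooked planes $\mathcal{C}(\mathsf{v}_1,p_1)$ and $\mathcal{C}(\mathsf{v}_2,p_2)$ are disjoint.
   Context: $V=\mathbb{R}^3$ with Lorentzian inner product $x\cdot y=x_1y_1+x_2y_2-x_3y_3$ and standard orientation; $E$ is the affine space with translation space $V$. Null: $x\cdot x=0$; spacelike: $x\cdot x>0$; future-pointing: third coordinate positive. The Lorentzian cross product $\boxtimes$ is the bilinear map with $u\cdot(v\boxtimes w)=\det[u\ v\ w]$. Spacelike $\mathsf{u},\mathsf{v}$ are ultraparallel if $\mathsf{u}\boxtimes\mathsf{v}$ is spacelike. For spacelike $\mathsf{v}$, $\mathsf{v}^-,\mathsf{v}^+$ are the two future-pointing null vectors of Euclidean length $1$ in $\mathsf{v}^\perp$, labelled so that $(\mathsf{v}^-,\mathsf{v}^+,\mathsf{v})$ is positively oriented. Spacelike $\mathsf{v}_1,\mathsf{v}_2$ are consistently oriented if $\mathsf{v}_1\cdot\mathsf{v}_2<0$ and $\mathsf{v}_i\cdot\mathsf{v}_j^{\pm}\le0$ for $i\ne j$. For null $x$, $\mathcal{P}(x)$ is the set of spacelike $w\in x^\perp$ with $w^+$ a positive multiple of $x$. The crooked plane $\mathcal{C}(\mathsf{v},p)=(p+\mathcal{P}(\mathsf{v}^+))\cup(p+\mathcal{P}(\mathsf{v}^-))\cup(p+\{x:\mathsf{v}\cdot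 x=0,\ x\cdot x\le0\})$. *)

(* Points of E and vectors of V are both modelled by 'rV[R]_3
   (E identified with V via a chosen origin). *)
From mathcomp Require Import all_boot all_order.
From mathcomp Require Import all_algebra.
From mathcomp Require Import ring.
Set Implicit Arguments. Unset Strict Implicit. Unset Printing Implicit Defensive.
Import Order.TTheory GRing.Theory Num.Theory.
Local Open Scope ring_scope.

Section Lorentz.
Variable R : rcfType.
Notation vec := 'rV[R]_3.

Definition c0 (x : vec) := x ord0 (@Ordinal 3 0 isT).
Definition c1 (x : vec) := x ord0 (@Ordinal 3 1 isT).
Definition c2 (x : vec) := x ord0 (@Ordinal 3 2 isT).

Definition ldot (x y : vec) : R := c0 x * c0 y + c1 x * c1 y - c2 x * c2 y.

Definition enorm (x : vec) : R := Num.sqrt (c0 x ^+ 2 + c1 x ^+ 2 + c2 x ^+ 2).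

Definition cols3 (u v w : vec) : 'M[R]_3 :=
  \matrix_(i < 3, j < 3) (if j == 0 :> nat then u ord0 i
                          else if j == 1 :> nat then v ord0 i else w ord0 i).

Definition null (x : vec) := ldot x x = 0.
Definition spacelike (x : vec) := ldot x x > 0.
Definition future (x : vec) := c2 x > 0.

(* Lorentzian cross product: u . (v [x] w) = det [u v w] for all u *)
Definition lcross (v w : vec) : vec :=
  \row_(i < 3) (if i == 0 :> nat then c1 v * c2 w - c2 v * c1 w
                else if i == 1 :> nat then c2 v * c0 w - c0 v * c2 w
                else - (c0 v * c1 w - c1 v * c0 w)).

Definition ultraparallel (u v : vec) :=
  spacelike u /\ spacelike v /\ spacelike (lcross u v).

Definition unit_null_perp (v x : vec) :=
  null x /\ future x /\ enorm x = 1 /\ ldot v x = 0.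

(* x = v^- and y = v^+ : the two such vectors, with (v^-, v^+, v) positively
   oriented. *)
Definition is_vminus (v x : vec) :=
  unit_null_perp v x /\
  exists y, unit_null_perp v y /\ \det (cols3 x y v) > 0.
Definition is_vplus (v y : vec) :=
  unit_null_perp v y /\
  exists x, unit_null_perp v x /\ \det (cols3 x y v) > 0.

Definition consistently_oriented (v1 v2 : vec) :=
  spacelike v1 /\ spacelike v2 /\ ldot v1 v2 < 0 /\
  (forall x, (is_vminus v2 x \/ is_vplus v2 x) -> ldot v1 x <= 0) /\
  (forall x, (is_vminus v1 x \/ is_vplus v1 x) -> ldot v2 x <= 0).

Definition Pwing (x w : vec) :=
  spacelike w /\ ldot w x = 0 /\
  exists y, is_vplus w y /\ exists c : R, 0 < c /\ y = c *: x.

Definition crooked (v p q : vec) :=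
  (exists vp w, is_vplus v vp /\ Pwing vp w /\ q = p + w) \/
  (exists vm w, is_vminus v vm /\ Pwing vm w /\ q = p + w) \/
  (exists x, ldot v x = 0 /\ ldot x x <= 0 /\ q = p + x).

End Lorentz.

Lemma lcross_spec (R : rcfType) (u v w : 'rV[R]_3) :
  ldot u (lcross v w) = \det (cols3 u v w).
Proof.
rewrite (expand_det_col _ 0) !big_ord_recl big_ord0 /cofactor.
rewrite !(expand_det_col _ 0) !big_ord_recl !big_ord0 /cofactor !det_mx11.
rewrite /ldot /lcross /c0 /c1 /c2 !mxE /=.
rewrite /= !expr0 !expr1 /bump /=.
repeat match goal with
 | |- context [@lift 3 ?a ?b] =>
   let k := eval compute in (nat_of_ord (@lift 3 a b)) in
   have -> : @lift 3 a b = (@Ordinal 3 k isT) by apply/val_inj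
 end.
have -> : (ord0 : 'I_3) = Ordinal (isT : 0 < 3)%N by apply/val_inj.
try (have -> : (0 : 'I_3) = Ordinal (isT : 0 < 3)%N by apply/val_inj).
rewrite /=.
ring.
Qed.

From mathcomp Require Import all_boot all_order all_algebra.
From mathcomp Require Import ring lra.
Import Order.TTheory GRing.Theory Num.Theory.
Local Open Scope ring_scope.

Set Implicit Arguments. Unset Strict Implicit. Unset Printing Implicit Defensive.

(* Each crooked plane C(v, a v^- - b v^+) lies in the union of the quadrants
   {q.v >= 0 > q.v^+} and {q.v <= 0 < q.v^-}: its positive wing lies on the
   positive side of v^perp, its negative wing on the negative side, and the stem
   splits between the two because nonspacelike x in v^perp have
   (x.v^-)(x.v^+) >= 0.  For f = v^+ or v^-, the vector v [x] f is a multiple of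
   f, so Cramer's rule for q, v1, f1, v2, f2 becomes a linear relation between
   q.v1, q.f1, q.v2, q.f2.  Consistent orientation and ultraparallelism (which
   makes v1.f2 strictly negative) fix the signs of its coefficients, and these
   signs forbid q from lying in a quadrant of both planes. *)

Section Lorentz.
Variable R : rcfType.
Implicit Types (a b c d e f g q u v w x y : 'rV[R]_3).

Definition triple u v w := ldot u (lcross v w).

Lemma tripleE u v w : triple u v w = c0 u * (c1 v * c2 w - c2 v * c1 w)
  + c1 u * (c2 v * c0 w - c0 v * c2 w) + c2 u * (c0 v * c1 w - c1 v * c0 w).
Proof. rewrite /triple /ldot /lcross /c0 /c1 /c2 !mxE /=; ring. Qed.

Lemma det_cols3 u v w : \det (cols3 u v w) = triple u v w.
Proof. by rewrite -lcross_spec. Qed.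

Lemma ldotC x y : ldot x y = ldot y x.
Proof. rewrite /ldot; ring. Qed.

Lemma ldotDl x y z : ldot (x + y) z = ldot x z + ldot y z.
Proof. rewrite /ldot /c0 /c1 /c2 !mxE; ring. Qed.

Lemma ldotNl x z : ldot (- x) z = - ldot x z.
Proof. rewrite /ldot /c0 /c1 /c2 !mxE; ring. Qed.

Lemma ldotZl (s : R) x z : ldot (s *: x) z = s * ldot x z.
Proof. rewrite /ldot /c0 /c1 /c2 !mxE; ring. Qed.

Lemma triple_cycle u v w : triple u v w = triple v w u.
Proof. rewrite !tripleE; ring. Qed.

Lemma triple_swap u v w : triple u v w = - triple v u w.
Proof. rewrite !tripleE; ring. Qed.

Lemma triple_diag u w : triple u u w = 0.
Proof. rewrite tripleE; ring. Qed.

Lemma tripleZ u v w (s : R) : triple u (s *: v) w = s * triple u v w.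
Proof. rewrite !tripleE /c0 /c1 /c2 !mxE; ring. Qed.

(* The product of two determinants is the Gram determinant; the sign is the
   determinant of the Lorentzian form. *)
Lemma triple_gram a b c d e f : triple a b c * triple d e f =
  - (ldot a d * (ldot b e * ldot c f - ldot b f * ldot c e)
   - ldot a e * (ldot b d * ldot c f - ldot b f * ldot c d)
   + ldot a f * (ldot b d * ldot c e - ldot b e * ldot c d)).
Proof. rewrite !tripleE /ldot; ring. Qed.

Lemma triple_cramer q w1 w2 w3 w4 :
  triple w2 w3 w4 * ldot q w1 - triple w1 w3 w4 * ldot q w2
  + triple w1 w2 w4 * ldot q w3 - triple w1 w2 w3 * ldot q w4 = 0.
Proof. rewrite !tripleE /ldot; ring. Qed.

Lemma null_future_ldot_le0 x y :
  null x -> future x -> null y -> future y -> ldot x y <= 0.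
Proof.
rewrite /null /future /ldot => nx fx ny fy.
have Lagrange : (c2 x * c2 y) ^+ 2
    = (c0 x * c0 y + c1 x * c1 y) ^+ 2 + (c0 x * c1 y - c1 x * c0 y) ^+ 2.
  have ex : c2 x * c2 x = c0 x * c0 x + c1 x * c1 x by lra.
  have ey : c2 y * c2 y = c0 y * c0 y + c1 y * c1 y by lra.
  by rewrite exprMn !expr2 ex ey; ring.
have := sqr_ge0 (c0 x * c1 y - c1 x * c0 y).
have : 0 < c2 x * c2 y by exact: mulr_gt0.
nra.
Qed.

Lemma enorm_eq1 x : enorm x = 1 -> c0 x ^+ 2 + c1 x ^+ 2 + c2 x ^+ 2 = 1.
Proof.
move=> x1; have x_ge0 : 0 <= c0 x ^+ 2 + c1 x ^+ 2 + c2 x ^+ 2 by nra.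
by rewrite -(sqr_sqrtr x_ge0) -/(enorm x) x1 expr1n.
Qed.

Lemma row3P x y : c0 x = c0 y -> c1 x = c1 y -> c2 x = c2 y -> x = y.
Proof.
rewrite /c0 /c1 /c2 => e0 e1 e2; apply/rowP => -[[|[|[|k]]] lt_k3] //;
  by rewrite (bool_irrelevance lt_k3 isT).
Qed.

(* Future null vectors of Euclidean length 1 all have third coordinate
   1/sqrt 2, so two orthogonal ones agree. *)
Lemma unit_null_orth_eq x y : null x -> future x -> enorm x = 1 ->
  null y -> future y -> enorm y = 1 -> ldot x y = 0 -> x = y.
Proof.
rewrite /null /future /ldot => nx fx /enorm_eq1 ex ny fy /enorm_eq1 ey xy.
rewrite !expr2 in ex ey.
have e2 : c2 x = c2 y.
  have : (c2 x - c2 y) * (c2 x + c2 y) = 0 by nra.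
  move/eqP; rewrite mulf_eq0 subr_eq0 => /orP[/eqP //|/eqP]; lra.
rewrite e2 in nx xy.
have sq0 : (c0 x - c0 y) ^+ 2 + (c1 x - c1 y) ^+ 2 = 0 by rewrite !expr2; nra.
have := sqr_ge0 (c0 x - c0 y); have := sqr_ge0 (c1 x - c1 y) => s1 s0.
have /eqP : (c0 x - c0 y) ^+ 2 = 0 by lra.
have /eqP : (c1 x - c1 y) ^+ 2 = 0 by lra.
by rewrite !sqrf_eq0 !subr_eq0 => /eqP e1 /eqP e0; apply: row3P.
Qed.

(* Three vectors of v^perp are dependent; [triple x y v != 0] only says that v
   is nonzero. *)
Lemma triple_orth_eq0 v a b c x y : ldot v a = 0 -> ldot v b = 0 ->
  ldot v c = 0 -> triple x y v != 0 -> triple a b c = 0.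
Proof.
move=> va vb vc xyv.
have := triple_gram a b c x y v.
rewrite [ldot a v]ldotC [ldot b v]ldotC [ldot c v]ldotC va vb vc.
rewrite !(mulr0, mul0r, subr0, sub0r, addr0, oppr0) => /eqP.
by rewrite mulf_eq0 (negbTE xyv) orbF => /eqP.
Qed.

Lemma unit_null_perp_two v a b c x y : unit_null_perp v a ->
  unit_null_perp v b -> unit_null_perp v c -> triple x y v != 0 ->
  [\/ a = b, b = c | a = c].
Proof.
move=> [na [fa [ea va]]] [nb [fb [eb vb]]] [nc [fc [ec vc]]] xyv.
have := triple_gram a b c a b c.
rewrite (triple_orth_eq0 va vb vc xyv) mul0r na nb nc.
rewrite [ldot b a]ldotC [ldot c a]ldotC [ldot c b]ldotC => gram0.
have /eqP : ldot a b * ldot b c * ldot a c = 0.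
  have : 2 * (ldot a b * ldot b c * ldot a c) = 0 by nra.
  by move/eqP; rewrite mulf_eq0 pnatr_eq0 => /eqP.
rewrite !mulf_eq0 => /orP[/orP[]|] /eqP orth.
- by apply: Or31; apply: unit_null_orth_eq.
- by apply: Or32; apply: unit_null_orth_eq.
- by apply: Or33; apply: unit_null_orth_eq.
Qed.

Lemma unit_null_perp_frame_unique v a b c d : unit_null_perp v a ->
  unit_null_perp v b -> unit_null_perp v c -> unit_null_perp v d ->
  0 < triple a b v -> 0 < triple c d v -> a = c /\ b = d.
Proof.
move=> Ua Ub Uc Ud abv cdv.
have abv0 := lt0r_neq0 abv.
have a_neq_b : a <> b by move=> ab; move: abv; rewrite ab triple_diag ltxx.
case: (unit_null_perp_two Ua Ub Uc abv0) => [// | bc | ac];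
  case: (unit_null_perp_two Ua Ub Ud abv0) => [// | bd | ad] //.
- by move: cdv; rewrite -bc -bd triple_diag ltxx.
- by exfalso; move: cdv; rewrite -bc -ad triple_swap; lra.
- by move: cdv; rewrite -ac -ad triple_diag ltxx.
Qed.

Lemma vminus_unique v x y : is_vminus v x -> is_vminus v y -> x = y.
Proof.
move=> [Ux [x' [Ux' xx'v]]] [Uy [y' [Uy' yy'v]]].
rewrite det_cols3 in xx'v; rewrite det_cols3 in yy'v.
by case: (unit_null_perp_frame_unique Ux Ux' Uy Uy' xx'v yy'v).
Qed.

Lemma vplus_unique v x y : is_vplus v x -> is_vplus v y -> x = y.
Proof.
move=> [Ux [x' [Ux' x'xv]]] [Uy [y' [Uy' y'yv]]].
rewrite det_cols3 in x'xv; rewrite det_cols3 in y'yv.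
by case: (unit_null_perp_frame_unique Ux' Ux Uy' Uy x'xv y'yv).
Qed.

Lemma vminus_vplus_triple_gt0 v em ep :
  is_vminus v em -> is_vplus v ep -> 0 < triple em ep v.
Proof.
move=> [Um [y [Uy emyv]]] [Up [x [Ux xepv]]].
rewrite det_cols3 in emyv; rewrite det_cols3 in xepv.
by case: (unit_null_perp_frame_unique Um Uy Ux Up emyv xepv) => -> _.
Qed.

Lemma ldot_vminus_vplus_lt0 v em ep :
  is_vminus v em -> is_vplus v ep -> ldot em ep < 0.
Proof.
move=> Hm Hp; have frame := vminus_vplus_triple_gt0 Hm Hp.
have [[nm [fm [em1 _]]] _] := Hm; have [[np [fp [ep1 _]]] _] := Hp.
rewrite lt_def null_future_ldot_le0 // andbT; apply/eqP => orth.
move: frame; rewrite (unit_null_orth_eq nm fm em1 np fp ep1 (esym orth)).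
by rewrite triple_diag ltxx.
Qed.

(* For null f in v^perp, v [x] f is proportional to f; the factor is read off
   against any g in v^perp. *)
Lemma triple_null_perp v f g x : null f -> ldot v f = 0 -> ldot v g = 0 ->
  triple v f g * triple v f x = ldot f g * ldot v v * ldot x f.
Proof.
move=> nf vf vg; rewrite triple_gram [ldot f v]ldotC [ldot g v]ldotC nf vf vg.
by rewrite [ldot f x]ldotC [ldot g f]ldotC; ring.
Qed.

Lemma Pwing_side v f g w : null f -> future f -> ldot v f = 0 ->
  ldot f g <= 0 -> triple v f g != 0 -> Pwing f w -> triple v f g * ldot w v < 0.
Proof.
move=> nf ff vf fg vfg [_ [wf [y [[_ [x [[nx [fx _]] xyw]]] [c [c_gt0 yE]]]]]].
move: xyw; rewrite yE det_cols3 tripleZ pmulr_rgt0 // => xfw.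
have gram : triple x f w * triple v f g = - (ldot f g * ldot x f * ldot w v).
  rewrite triple_gram [ldot f v]ldotC vf nf wf; ring.
have xf := null_future_ldot_le0 nx fx nf ff.
have wv_neq0 : ldot w v != 0.
  apply: contra vfg => /eqP wv0; rewrite wv0 mulr0 oppr0 in gram.
  by move/eqP: gram; rewrite mulf_eq0 (gt_eqF xfw).
have fgxf : 0 <= ldot f g * ldot x f by rewrite mulr_le0.
have : triple x f w * (triple v f g * ldot w v) <= 0.
  have -> : triple x f w * (triple v f g * ldot w v)
      = - (ldot f g * ldot x f * ldot w v ^+ 2) by rewrite mulrA gram; ring.
  by rewrite oppr_le0 mulr_ge0 ?sqr_ge0.
by rewrite lt_neqAle mulf_neq0 ?(pmulr_rle0 _ xfw).
Qed.

(* A null vector orthogonal to two ultraparallel vectors is zero, i.e. all its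
   triple products vanish. *)
Lemma null_perp_ultraparallel v1 v2 e a b : null e -> ldot v1 e = 0 ->
  ldot v2 e = 0 -> spacelike (lcross v1 v2) -> triple e a b = 0.
Proof.
move=> ne v1e v2e sw.
have /eqP : triple e v1 v2 ^+ 2 = 0.
  by rewrite expr2 triple_gram ne [ldot e v1]ldotC [ldot e v2]ldotC v1e v2e; ring.
rewrite sqrf_eq0 => /eqP ev1v2.
have := triple_gram (lcross v1 v2) v1 v2 e a b.
rewrite [ldot (lcross v1 v2) e]ldotC -/(triple e v1 v2) ev1v2 v1e v2e.
move=> gram.
have /eqP : ldot (lcross v1 v2) (lcross v1 v2) * triple e a b = 0.
  by rewrite -[ldot _ _]/(triple (lcross v1 v2) v1 v2) gram; ring.
by rewrite mulf_eq0 (gt_eqF sw) => /eqP.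
Qed.

(* Writing x = s em + t ep, one has x.x = 2 s t (em.ep) and
   (x.em)(x.ep) = s t (em.ep)^2. *)
Lemma nonspacelike_perp_frame_ge0 v em ep x : is_vminus v em ->
  is_vplus v ep -> ldot v x = 0 -> ldot x x <= 0 -> 0 <= ldot x ep * ldot x em.
Proof.
move=> Hm Hp vx xx.
have frame := lt0r_neq0 (vminus_vplus_triple_gt0 Hm Hp).
have mp := ldot_vminus_vplus_lt0 Hm Hp.
have [[nm [_ [_ vm]]] _] := Hm; have [[np [_ [_ vp]]] _] := Hp.
have := triple_gram em ep x em ep x.
rewrite (triple_orth_eq0 vm vp vx frame) mul0r nm np.
rewrite (ldotC ep em) (ldotC em x) (ldotC ep x) => gram.
have : 2 * ldot em ep * (ldot x em * ldot x ep) = ldot em ep ^+ 2 * ldot x x.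
  by rewrite expr2; lra.
nra.
Qed.

(* For (f, g) = (v^+, v^-) this says q.v >= 0 > q.v^+, and for
   (f, g) = (v^-, v^+) it says q.v <= 0 < q.v^-. *)
Definition crooked_side v f g q :=
  triple v f g * ldot q v <= 0 /\ 0 < triple v f g * ldot q f.

Lemma crooked_side_exists v em ep (a b : R) q : is_vminus v em ->
  is_vplus v ep -> 0 < a -> 0 < b -> crooked v (a *: em - b *: ep) q ->
  exists f g, [/\ unit_null_perp v f, unit_null_perp v g,
                  is_vminus v f \/ is_vplus v f & crooked_side v f g q].
Proof.
move=> Hm Hp a_gt0 b_gt0.
have frame := vminus_vplus_triple_gt0 Hm Hp.
have mp := ldot_vminus_vplus_lt0 Hm Hp.
have pm : ldot ep em < 0 by rewrite ldotC.
have [Um _] := Hm; have [Up _] := Hp.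
have [nm [fm [_ vm]]] := Um; have [np [fp [_ vp]]] := Up.
have side_p z : 0 <= ldot z v -> ldot z ep < 0 -> exists f g,
    [/\ unit_null_perp v f, unit_null_perp v g,
        is_vminus v f \/ is_vplus v f & crooked_side v f g z].
  move=> qv qp; exists ep, em; split; [by [] | by [] | by right |].
  by rewrite /crooked_side triple_cycle triple_swap; split; nra.
have side_m z : ldot z v <= 0 -> 0 < ldot z em -> exists f g,
    [/\ unit_null_perp v f, unit_null_perp v g,
        is_vminus v f \/ is_vplus v f & crooked_side v f g z].
  move=> qv qm; exists em, ep; split; [by [] | by [] | by left |].
  by rewrite /crooked_side triple_cycle; split; nra.
have ldot_q w z : ldot (a *: em - b *: ep + w) z
    = a * ldot em z - b * ldot ep z + ldot w z by rewrite !ldotDl ldotNl !ldotZl.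
have [emv epv] : ldot em v = 0 /\ ldot ep v = 0 by rewrite !(ldotC _ v).
case=> [[y [w [/(vplus_unique Hp) <- [Hw ->]]]] |
        [[y [w [/(vminus_unique Hm) <- [Hw ->]]]] | [x [vx [xx ->]]]]].
- have := Pwing_side np fp vp (ltW pm) _ Hw.
  rewrite triple_cycle triple_swap oppr_eq0 (gt_eqF frame) => /(_ isT) wv.
  have [_ [wp _]] := Hw.
  by apply: side_p; rewrite ldot_q ?emv ?epv ?np ?wp; nra.
- have := Pwing_side nm fm vm (ltW mp) _ Hw.
  rewrite triple_cycle (gt_eqF frame) => /(_ isT) wv.
  have [_ [wm _]] := Hw.
  by apply: side_m; rewrite ldot_q ?emv ?epv ?nm ?wm; nra.
- have quad := nonspacelike_perp_frame_ge0 Hm Hp vx xx.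
  have qv : ldot (a *: em - b *: ep + x) v = 0.
    by rewrite ldot_q emv epv ldotC vx; ring.
  have [qp | qp] := ltP (ldot (a *: em - b *: ep + x) ep) 0.
    by apply: side_p; rewrite ?qv.
  apply: side_m; first by rewrite qv.
  move: qp; rewrite !ldot_q np nm (ldotC ep em) => qp.
  have xp : 0 < ldot x ep by nra.
  have xm : 0 <= ldot x em by rewrite -(pmulr_rge0 _ xp).
  nra.
Qed.

Lemma crooked_side_ldot_lt0 v f g q : unit_null_perp v f ->
  unit_null_perp v g -> crooked_side v f g q -> ldot f g < 0.
Proof.
move=> [nf [ff [f1 _]]] [ng [fg [g1 _]]] [_ side].
rewrite lt_def null_future_ldot_le0 // andbT; apply: contraTneq side => orth.
rewrite -(unit_null_orth_eq nf ff f1 ng fg g1 (esym orth)).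
by rewrite triple_cycle triple_diag mul0r ltxx.
Qed.

(* Multiplying Cramer's identity for q, v1, f1, v2, f2 by
   triple v1 f1 g1 * triple v2 f2 g2 turns every triple product into an inner
   product; of the four resulting terms all are <= 0 and the second is < 0. *)
Lemma crooked_sides_disjoint v1 v2 f1 g1 f2 g2 q :
  spacelike v1 -> spacelike v2 ->
  unit_null_perp v1 f1 -> unit_null_perp v1 g1 ->
  unit_null_perp v2 f2 -> unit_null_perp v2 g2 ->
  ldot v1 f2 < 0 -> ldot v2 f1 <= 0 ->
  crooked_side v1 f1 g1 q -> ~ crooked_side v2 f2 g2 q.
Proof.
move=> s1 s2 U1 V1 U2 V2 v1f2 v2f1 S1 S2.
have fg1 := crooked_side_ldot_lt0 U1 V1 S1.
have fg2 := crooked_side_ldot_lt0 U2 V2 S2.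
have [[n1 [fu1 [_ v1f1]]] [_ [_ [_ v1g1]]]] := (U1, V1).
have [[n2 [fu2 [_ v2f2]]] [_ [_ [_ v2g2]]]] := (U2, V2).
have f1f2 := null_future_ldot_le0 n1 fu1 n2 fu2.
have m1_lt0 : ldot f1 g1 * ldot v1 v1 < 0 by rewrite pmulr_llt0.
have m2_lt0 : ldot f2 g2 * ldot v2 v2 < 0 by rewrite pmulr_llt0.
have e1 x := triple_null_perp x n1 v1f1 v1g1.
have e2 x := triple_null_perp x n2 v2f2 v2g2.
have E := triple_cramer q v1 f1 v2 f2.
rewrite (triple_cycle f1) (triple_cycle v1 v2) in E.
set k1 := triple v1 f1 g1 in e1 S1 *; set k2 := triple v2 f2 g2 in e2 S2 *.
set m1 := ldot f1 g1 * ldot v1 v1 in m1_lt0 e1 *.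
set m2 := ldot f2 g2 * ldot v2 v2 in m2_lt0 e2 *.
have : m2 * ldot f1 f2 * (k1 * ldot q v1) - m2 * ldot v1 f2 * (k1 * ldot q f1)
     + m1 * ldot f1 f2 * (k2 * ldot q v2) - m1 * ldot v2 f1 * (k2 * ldot q f2)
     = 0.
  rewrite -e2 -(e2 v1) (ldotC f1 f2) -e1 -(e1 v2).
  by rewrite -(mulr0 (k1 * k2)) -E; ring.
case: S1 S2 => [qv1 qf1] [qv2 qf2].
have t1 : m2 * ldot f1 f2 * (k1 * ldot q v1) <= 0.
  by rewrite mulr_ge0_le0 // mulr_le0 // ltW.
have t2 : 0 < m2 * ldot v1 f2 * (k1 * ldot q f1).
  by rewrite mulr_gt0 // nmulr_lgt0.
have t3 : m1 * ldot f1 f2 * (k2 * ldot q v2) <= 0.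
  by rewrite mulr_ge0_le0 // mulr_le0 // ltW.
have t4 : 0 <= m1 * ldot v2 f1 * (k2 * ldot q f2).
  by apply: mulr_ge0; [apply: mulr_le0 => //; exact: ltW | exact: ltW].
lra.
Qed.

End Lorentz.

Unset Implicit Arguments.

Theorem corollary4p4 (R : rcfType) (v1 v2 v1m v1p v2m v2p : 'rV[R]_3)
  (a1 b1 a2 b2 : R) :
  consistently_oriented v1 v2 ->
  ultraparallel v1 v2 ->
  is_vminus v1 v1m -> is_vplus v1 v1p ->
  is_vminus v2 v2m -> is_vplus v2 v2p ->
  0 < a1 -> 0 < b1 -> 0 < a2 -> 0 < b2 ->
  ~ (exists q : 'rV[R]_3,
       crooked v1 (a1 *: v1m - b1 *: v1p) q /\
       crooked v2 (a2 *: v2m - b2 *: v2p) q).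
Proof.
move=> [s1 [s2 [_ [co1 co2]]]] [_ [_ sw]] Hm1 Hp1 Hm2 Hp2.
move=> a1_gt0 b1_gt0 a2_gt0 b2_gt0 [q [C1 C2]].
have [f1 [g1 [U1 V1 F1 S1]]] := crooked_side_exists Hm1 Hp1 a1_gt0 b1_gt0 C1.
have [f2 [g2 [U2 V2 F2 S2]]] := crooked_side_exists Hm2 Hp2 a2_gt0 b2_gt0 C2.
apply: (crooked_sides_disjoint s1 s2 U1 V1 U2 V2 _ (co2 f1 F1) S1 S2).
rewrite lt_neqAle co1 // andbT; apply/eqP => v1f2.
have [[n2 [_ [_ v2f2]]] [_ frame2]] := (U2, S2).
move: frame2; rewrite triple_cycle.
by rewrite (null_perp_ultraparallel g2 v2 n2 v1f2 v2f2 sw) mul0r ltxx.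
Qed.
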